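(* Let $R$ be a division ring and let $\{p_n(x)\}_{n\ge0}\subseteq R[x]$ and $\{q_n(y)\}_{n\ge0}\subseteq R[y]$ be polynomials with $\deg p_n=\deg q_n=n$ for all $n$. For any sequence $\{c_k\}_{k\in\mathbb{Z}_{\ge0}}$ in $R$ there exists a unique family of bimoments $\{I_{a,b}\}_{a,b\in\mathbb{Z}_{\ge0}}\subseteq R$ such that, for the associated pairing, $\langle p_n,q_m\rangle=0$ for all $n\neq m$ and $\langle p_k,q_k\rangle=c_k$ for all $k$.
   Context: Elements of $R[x]$ are written $\sum_i a_i x^i$ and elements of $R[y]$ as $\sum_j y^j b_j$ with coefficients in $R$. A family $\{I_{a,b}\}$ of elements of $R$ (bimoments) determines the pairing $\langle\cdot,\cdot\rangle:R[x]\times R[y]\to R$, $\langle \sum_i a_i x^i,\sum_j y^j b_j\rangle=\sum_{i,j}a_iI_{i,j}b_j$. *)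

From HB Require Import structures.
From mathcomp Require Import all_boot all_order all_algebra.
Set Implicit Arguments. Unset Strict Implicit. Unset Printing Implicit Defensive.
Import GRing.Theory.
Local Open Scope ring_scope.

(* Polynomials in R[x] and R[y] are both represented by {poly R}
   (coefficient sequences); coefficients of p are multiplied on the left,
   those of q on the right. *)
Definition bipairing (R : nzRingType) (I : nat -> nat -> R) (p q : {poly R}) : R :=
  \sum_(i < size p) \sum_(j < size q) p`_i * I i j * q`_j.

From HB Require Import structures.
From mathcomp Require Import all_boot all_order all_algebra.
From Stdlib Require Import FunctionalExtensionality.
Set Implicit Arguments. Unset Strict Implicit. Unset Printing Implicit Defensive.
Import GRing.Theory.
Local Open Scope ring_scope.

(* Let P and Q be the lower triangular coefficient matrices of (p_n) and (q_n);
   the conditions on the bimoments say P I Q^T = diag(c).  Since the diagonals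
   of P and Q are invertible, this system is triangular.  Uniqueness: the last
   term of <p_n, q_m> is lead(p_n) I_{n,m} lead(q_m), so by induction a family
   pairing every p_n with every q_m to 0 vanishes.  Existence: take
   I = A diag(c) B^T with A a lower triangular right inverse of P and B^T a
   left inverse of Q^T; the latter is the former, computed in the opposite ring. *)

Lemma sum_delta_mull (R : nzSemiRingType) (N n : nat) (F : nat -> R) :
  (n < N)%N -> \sum_(k < N) ((k : nat) == n)%:R * F k = F n.
Proof.
move=> ltnN; rewrite (eq_bigr (fun k : 'I_N => if (k : nat) == n then F k else 0)).
  by rewrite -big_mkcond big_ord1_eq ltnN.
by move=> k _; rewrite mulr_natl mulrb.
Qed.

Section TriangularInverse.
Variables (R : unitRingType) (P : nat -> nat -> R).
Hypothesis P_diag_unit : forall n, P n n \is a GRing.unit.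

(* [tri_inv_col k n] holds the entries [A i k], [i < n], of column [k] of the
   inverse; row [n] is solved from [\sum_(i <= n) P n i * A i k = (n == k)]. *)
Fixpoint tri_inv_col (k n : nat) : nat -> R :=
  if n is n'.+1 then
    let A := tri_inv_col k n' in
    let A_n' := (P n' n')^-1 * ((n' == k)%:R - \sum_(i < n') P n' i * A i) in
    fun i => if i == n' then A_n' else A i
  else fun _ => 0.

Definition tri_inv (i k : nat) : R := tri_inv_col k i.+1 i.

Lemma tri_inv_colE k n i : (i < n)%N -> tri_inv_col k n i = tri_inv i k.
Proof.
elim: n => // n IHn; rewrite ltnS leq_eqVlt => /orP[/eqP -> //|lt_in] /=.
by rewrite (ltn_eqF lt_in) IHn.
Qed.

Lemma tri_invE n k :
  tri_inv n k = (P n n)^-1 * ((n == k)%:R - \sum_(i < n) P n i * tri_inv i k).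
Proof.
rewrite /tri_inv /= eqxx; congr (_ * (_ - _)).
by apply: eq_bigr => i _; rewrite tri_inv_colE.
Qed.

Lemma tri_inv_lower i k : (i < k)%N -> tri_inv i k = 0.
Proof.
elim/ltn_ind: i => i IHi lt_ik; rewrite tri_invE (ltn_eqF lt_ik) big1 ?subr0 ?mulr0 //.
by move=> j _; rewrite IHi ?mulr0 // (ltn_trans _ lt_ik).
Qed.

Lemma mul_tri_inv n k : \sum_(i < n.+1) P n i * tri_inv i k = (n == k)%:R.
Proof.
by rewrite big_ord_recr /= [tri_inv n k]tri_invE mulVKr // addrC subrK.
Qed.

End TriangularInverse.

Section Bimoments.
Variables (R : unitRingType) (p q : nat -> {poly R}).
Hypothesis size_p : forall n, size (p n) = n.+1.
Hypothesis size_q : forall n, size (q n) = n.+1.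
Hypothesis lead_p_unit : forall n, lead_coef (p n) \is a GRing.unit.
Hypothesis lead_q_unit : forall n, lead_coef (q n) \is a GRing.unit.

Lemma bipairing_pq (I : nat -> nat -> R) n m :
  bipairing I (p n) (q m) =
  \sum_(i < n.+1) \sum_(j < m.+1) (p n)`_i * I i j * (q m)`_j.
Proof. by rewrite /bipairing size_p size_q. Qed.

Lemma coef_p_diag_unit n : (p n)`_n \is a GRing.unit.
Proof. by rewrite -[n in _`_n]/(n.+1.-1) -size_p -lead_coefE. Qed.

Lemma coef_q_diag_unit n : (q n)`_n \is a GRing.unit.
Proof. by rewrite -[n in _`_n]/(n.+1.-1) -size_q -lead_coefE. Qed.

Lemma bipairingB (I J : nat -> nat -> R) f g :
  bipairing (fun i j => I i j - J i j) f g = bipairing I f g - bipairing J f g.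
Proof.
rewrite /bipairing -sumrB; apply: eq_bigr => i _; rewrite -sumrB.
by apply: eq_bigr => j _; rewrite mulrBr mulrBl.
Qed.

Lemma bimoments_eq0 (D : nat -> nat -> R) :
  (forall n m, bipairing D (p n) (q m) = 0) -> forall i j, D i j = 0.
Proof.
move=> D0 n; elim/ltn_ind: n => n IHn m; elim/ltn_ind: m => m IHm.
have := D0 n m; rewrite bipairing_pq big_ord_recr /= big1 => [|i _]; last first.
  by apply: big1 => j _; rewrite IHn ?mulr0 ?mul0r /=.
rewrite add0r big_ord_recr /= big1 => [|j _]; last by rewrite IHm ?mulr0 ?mul0r /=.
rewrite add0r /= => lead_D0.
rewrite -(mulKr (coef_p_diag_unit n) (D n m)).
by rewrite -(mulrK (coef_q_diag_unit m) (_ * D n m)) lead_D0 mul0r mulr0.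
Qed.

Lemma bimoments_unique (I J : nat -> nat -> R) :
  (forall n m, bipairing I (p n) (q m) = bipairing J (p n) (q m)) -> I = J.
Proof.
move=> eqIJ; apply: functional_extensionality => i.
apply: functional_extensionality => j; apply/eqP; rewrite -subr_eq0; apply/eqP.
by apply: (bimoments_eq0 (D := fun i j => I i j - J i j)) => n m; rewrite bipairingB eqIJ subrr.
Qed.

Local Notation A := (tri_inv (fun n i => (p n)`_i)).
(* The cast makes products with [B j k] live in [R] rather than in [R^c]. *)
Local Notation B j k := (@tri_inv R^c (fun n i => (q n)`_i) j k : R).

Lemma sum_coef_p_A n k : \sum_(i < n.+1) (p n)`_i * A i k = (n == k)%:R.
Proof. exact: mul_tri_inv coef_p_diag_unit n k. Qed.

Lemma sum_B_coef_q m k : \sum_(j < m.+1) B j k * (q m)`_j = (m == k)%:R.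
Proof. exact: (@mul_tri_inv R^c _ coef_q_diag_unit). Qed.

Variable c : nat -> R.

Definition diag_bimoments (i j : nat) : R := \sum_(k < i.+1) A i k * c k * B j k.

Lemma diag_bimoments_widen N i j :
  (i < N)%N -> diag_bimoments i j = \sum_(k < N) A i k * c k * B j k.
Proof.
move=> lt_iN; rewrite /diag_bimoments (big_ord_widen N (fun k => A i k * c k * B j k) lt_iN).
rewrite big_mkcond; apply: eq_bigr => k _; case: ltnP => // le_ik.
by rewrite tri_inv_lower ?mul0r.
Qed.

Lemma bipairing_diag_bimoments n m :
  bipairing diag_bimoments (p n) (q m) = c n * (m == n)%:R.
Proof.
have -> : bipairing diag_bimoments (p n) (q m) =
    \sum_(k < n.+1) (\sum_(i < n.+1) (p n)`_i * A i k) * c k *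
                    (\sum_(j < m.+1) B j k * (q m)`_j).
  rewrite bipairing_pq.
  under eq_bigr => i _ do under eq_bigr => j _ do
    rewrite (diag_bimoments_widen j (ltn_ord i)) mulr_sumr mulr_suml.
  under [RHS]eq_bigr => k _ do rewrite !mulr_suml.
  rewrite [RHS]exchange_big; apply: eq_bigr => i _.
  under [RHS]eq_bigr => k _ do rewrite mulr_sumr.
  rewrite [RHS]exchange_big; apply: eq_bigr => j _; apply: eq_bigr => k _.
  by rewrite !mulrA.
under eq_bigr do rewrite sum_coef_p_A sum_B_coef_q -mulrA [n == _]eq_sym.
by rewrite (sum_delta_mull (fun k => c k * (m == k)%:R)).
Qed.

End Bimoments.

Theorem mainTheorem4 (R : unitRingType)
  (hdiv : forall x : R, x != 0 -> x \is a GRing.unit)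
  (p q : nat -> {poly R})
  (hp : forall n, size (p n) = n.+1)
  (hq : forall n, size (q n) = n.+1)
  (c : nat -> R) :
  exists! I : nat -> nat -> R,
    (forall n m, n <> m -> bipairing I (p n) (q m) = 0) /\
    (forall k, bipairing I (p k) (q k) = c k).
Proof.
have lead_unit (f : {poly R}) n : size f = n.+1 -> lead_coef f \is a GRing.unit.
  by move=> size_f; apply: hdiv; rewrite lead_coef_eq0 -size_poly_eq0 size_f.
have lead_p n := lead_unit _ _ (hp n); have lead_q n := lead_unit _ _ (hq n).
have pairing_diag := bipairing_diag_bimoments hp hq lead_p lead_q c.
exists (diag_bimoments p q c); split; first split.
- by move=> n m /eqP ne_nm; rewrite pairing_diag eq_sym (negbTE ne_nm) mulr0.
- by move=> k; rewrite pairing_diag eqxx mulr1.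
- move=> I [pair_ne pair_eq]; apply: (bimoments_unique hp hq lead_p lead_q) => n m.
  rewrite pairing_diag; case: (eqVneq m n) => [->|ne_mn].
    by rewrite pair_eq mulr1.
  by rewrite pair_ne ?mulr0 //; apply/eqP; rewrite eq_sym.
Qed.
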